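(* Under the hypotheses of the Monopoly Theorem ($v_1\ge\cdots\ge v_n>0$, $A_i>0$, $1\ge q_1>q_2>\cdots>q_n\ge0$), let $\lambda_t=\frac{\sum_i v_i a_{i,t} q_i}{\sum_i v_i a_{i,t}}$ be the conditional probability of a purchase at step $t$ under the quality ranking. Then $\lambda_t\to q_1$ almost surely as $t\to\infty$, while for every ranking $\sigma\in S_n$ and every appeal vector $b\in(0,\infty)^n$ one has $\sum_i \frac{v_{\sigma_i} b_i}{\sum_j v_{\sigma_j}b_j}q_i\le q_1$. Thus the per-step purchase probability of the quality ranking asymptotically attains the maximum possible value.
   Context: Dynamic trial-offer market with social influence under the quality ranking: product $i$ is permanently in position $i$ with visibility $v_i$; $d_{i,t}$ is the number of purchases of product $i$ before step $t$ ($d_{i,1}=0$), $a_{i,t}=A_i+d_{i,t}$; at step $t$ a participant tries product $i$ with probability $\frac{v_i a_{i,t}}{\sum_j v_j a_{j,t}}$ and purchases it with probability $q_i$, in which case $d_{i,t+1}=d_{i,t}+1$. A ranking $\sigma\in S_n$ places product $i$ in position $\sigma_i$. *)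

From Stdlib Require Import Reals Lra Lia Arith.
Open Scope R_scope.

(* Products are indexed 0..n-1; product i (0-based) is in position i.
   Finite sum over indices 0..n-1. *)
Fixpoint fsum (n : nat) (f : nat -> R) : R :=
  match n with
  | O => 0
  | S k => fsum k f + f k
  end.

(* appeal a_{i,t} = A_i + d_{i,t} for a purchase-count state d *)
Definition appeal (A : nat -> R) (d : nat -> nat) (i : nat) : R := A i + INR (d i).

Definition tryp (n : nat) (v A : nat -> R) (d : nat -> nat) (i : nat) : R :=
  v i * appeal A d i / fsum n (fun j => v j * appeal A d j).

Definition lam (n : nat) (v A q : nat -> R) (d : nat -> nat) : R :=
  fsum n (fun i => v i * appeal A d i * q i) / fsum n (fun j => v j * appeal A d j).

Definition incr (d : nat -> nat) (i : nat) : nat -> nat :=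
  fun j => if Nat.eqb j i then S (d j) else d j.

Definition bad (n : nat) (v A q : nat -> R) (eps : R) (d : nat -> nat) : bool :=
  if Rlt_dec eps (Rabs (lam n v A q d - q 0%nat)) then true else false.

(* badp t0 k s d = probability, for the market process started at step s in
   state d, that some step s' with s <= s' <= s+k-1 and s' >= t0 has
   |lambda_{s'} - q_1| > eps. *)
Fixpoint badp (n : nat) (v A q : nat -> R) (eps : R) (t0 : nat)
         (k s : nat) (d : nat -> nat) : R :=
  match k with
  | O => 0
  | S k' =>
      if andb (Nat.leb t0 s) (bad n v A q eps d) then 1
      else (1 - lam n v A q d) * badp n v A q eps t0 k' (S s) d
           + fsum n (fun i => tryp n v A d i * q i
                               * badp n v A q eps t0 k' (S s) (incr d i))
  end.

Definition is_perm (n : nat) (sigma : nat -> nat) : Prop :=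
  (forall i, (i < n)%nat -> (sigma i < n)%nat) /\
  (forall i j, (i < n)%nat -> (j < n)%nat -> sigma i = sigma j -> i = j).

(* The second claim holds because the purchase probability of any ranking is a convex
   combination of the [q i], all at most [q 0].

   For the first, a step with [|lam - q 0| > eps] forces some product [j >= 1] to be more
   appealing than [eps / n] times product 0.  The probability of such a step after time [t0]
   is bounded by the initial value of a nonnegative supermartingale that is at least 1 on
   these states, made of two parts.  For each [j >= 1], an urn potential built from factors
   [1 + m_j / a_j] and [1 - kap / a_0] with [kap < m_j] behaves like [a_j ^ m_j / a_0 ^ kap];
   it is a supermartingale and becomes large once [a_j] is large and comparable to [a_0].
   Otherwise all appeals are bounded, so only boundedly many sales have happened; as every
   step is a sale with probability bounded below, [(1/2) ^ sales / mu ^ step] is a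
   supermartingale, and it is negligible at time 1 after scaling by [mu ^ t0]. *)

From Stdlib Require Import Reals Lra Lia Classical.
Open Scope R_scope.

Lemma fsum_ext n f g : (forall i, (i < n)%nat -> f i = g i) -> fsum n f = fsum n g.
Proof.
  induction n as [|n IH]; intros Hfg; simpl; [reflexivity|].
  rewrite IH, Hfg; auto with arith.
Qed.

Lemma fsum_le n f g : (forall i, (i < n)%nat -> f i <= g i) -> fsum n f <= fsum n g.
Proof.
  induction n as [|n IH]; intros Hfg; simpl; [lra|].
  apply Rplus_le_compat; [apply IH; auto with arith | apply Hfg; lia].
Qed.

Lemma fsum_add n f g : fsum n (fun i => f i + g i) = fsum n f + fsum n g.
Proof. induction n as [|n IH]; simpl; [lra|]. rewrite IH; ring. Qed.

Lemma fsum_scal n c f : fsum n (fun i => c * f i) = c * fsum n f.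
Proof. induction n as [|n IH]; simpl; [ring|]. rewrite IH; ring. Qed.

Lemma fsum_div n c f : fsum n (fun i => f i / c) = fsum n f / c.
Proof. induction n as [|n IH]; simpl; [unfold Rdiv; ring|]. rewrite IH; unfold Rdiv; ring. Qed.

Lemma fsum_zero n : fsum n (fun _ => 0) = 0.
Proof. induction n as [|n IH]; simpl; lra. Qed.

Lemma fsum_nonneg n f : (forall i, (i < n)%nat -> 0 <= f i) -> 0 <= fsum n f.
Proof. intros Hf. rewrite <- (fsum_zero n). now apply fsum_le. Qed.

Lemma fsum_term_le n f k :
  (forall i, (i < n)%nat -> 0 <= f i) -> (k < n)%nat -> f k <= fsum n f.
Proof.
  induction n as [|n IH]; intros Hf Hk; [lia|]. simpl.
  destruct (Nat.eq_dec k n) as [->|Hkn].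
  - assert (0 <= fsum n f) by (apply fsum_nonneg; auto with arith). lra.
  - assert (f k <= fsum n f) by (apply IH; [auto with arith | lia]).
    assert (0 <= f n) by (apply Hf; lia). lra.
Qed.

Lemma fsum_pos n f : (1 <= n)%nat -> (forall i, (i < n)%nat -> 0 < f i) -> 0 < fsum n f.
Proof.
  intros Hn Hf. apply Rlt_le_trans with (f 0%nat); [apply Hf; lia|].
  apply fsum_term_le; [intros; apply Rlt_le, Hf | ]; auto.
Qed.

Lemma fsum_pred n f : (1 <= n)%nat -> fsum n f = fsum (pred n) f + f (pred n).
Proof. destruct n; [lia | reflexivity]. Qed.

Lemma fsum_normalized_le n w f x :
  (forall i, (i < n)%nat -> 0 <= w i) -> 0 < fsum n w -> (forall i, (i < n)%nat -> f i <= x) ->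
  fsum n (fun i => w i / fsum n w * f i) <= x.
Proof.
  intros Hw HS Hf. apply Rle_trans with (fsum n (fun i => x * (w i / fsum n w))).
  - apply fsum_le. intros i Hi. rewrite Rmult_comm. apply Rmult_le_compat_r; auto.
    apply Rmult_le_pos; [auto | apply Rlt_le, Rinv_0_lt_compat; auto].
  - rewrite fsum_scal, fsum_div, Rdiv_diag by lra. lra.
Qed.

Lemma fsum_le_const n f X : (forall i, (i < n)%nat -> f i <= X) -> fsum n f <= INR n * X.
Proof.
  induction n as [|n IH]; intros Hf; cbn [fsum]; [simpl; lra|].
  rewrite S_INR. assert (fsum n f <= INR n * X) by (apply IH; auto with arith).
  assert (f n <= X) by (apply Hf; lia). lra.
Qed.

Lemma fsum_delta n k X : (k < n)%nat -> fsum n (fun i => if Nat.eqb i k then X else 0) = X.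
Proof.
  induction n as [|n IH]; intros Hk; [lia|]. simpl.
  destruct (Nat.eqb_spec n k) as [->|Hnk]; [|rewrite IH by lia; ring].
  rewrite (fsum_ext k _ (fun _ => 0)), fsum_zero; [ring|].
  intros i Hi. destruct (Nat.eqb_spec i k); [lia | reflexivity].
Qed.

Fixpoint nat_fsum (n : nat) (d : nat -> nat) : nat :=
  match n with O => O | S k => (nat_fsum k d + d k)%nat end.

Lemma INR_nat_fsum n d : INR (nat_fsum n d) = fsum n (fun i => INR (d i)).
Proof. induction n as [|n IH]; simpl; [reflexivity|]. now rewrite plus_INR, IH. Qed.

Lemma nat_fsum_zero n : nat_fsum n (fun _ => 0%nat) = 0%nat.
Proof. induction n as [|n IH]; simpl; lia. Qed.

Lemma nat_fsum_incr n d i : (i < n)%nat -> nat_fsum n (incr d i) = S (nat_fsum n d).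
Proof.
  induction n as [|n IH]; intros Hi; [lia|]. simpl. unfold incr at 2.
  destruct (Nat.eqb_spec n i) as [->|Hni]; [|rewrite IH by lia; lia].
  enough (nat_fsum i (incr d i) = nat_fsum i d) by lia.
  clear Hi. assert (Hp : forall p, (p <= i)%nat -> nat_fsum p (incr d i) = nat_fsum p d).
  { induction p as [|p IHp]; intros Hp; simpl; [reflexivity|].
    rewrite IHp by lia. unfold incr. destruct (Nat.eqb_spec p i); [lia | reflexivity]. }
  apply Hp; lia.
Qed.

Lemma uniform_threshold (N : nat) (P : nat -> R -> Prop) :
  (forall j L L', P j L -> L <= L' -> P j L') ->
  (forall j, (j < N)%nat -> exists L, 0 < L /\ P j L) ->
  exists L, 0 < L /\ forall j, (j < N)%nat -> P j L.
Proof.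
  intros Hmono. induction N as [|N IH]; intros Hex.
  - exists 1. split; [lra | intros; lia].
  - destruct IH as [L1 [HL1 H1]]; [intros; apply Hex; lia|].
    destruct (Hex N ltac:(lia)) as [L2 [HL2 H2]].
    exists (Rmax L1 L2). split; [apply Rlt_le_trans with L1; [auto | apply Rmax_l]|].
    intros j Hj. destruct (Nat.eq_dec j N) as [->|HjN].
    + apply Hmono with L2; [auto | apply Rmax_r].
    + apply Hmono with L1; [apply H1; lia | apply Rmax_l].
Qed.

Lemma Rle_div_of_mult_le x y z : 0 < z -> x * z <= y -> x <= y / z.
Proof. intros Hz H. apply Rmult_le_reg_r with z; auto. unfold Rdiv. rewrite Rmult_assoc, Rinv_l; lra. Qed.

Lemma Rdiv_le_of_le_mult x y z : 0 < z -> x <= y * z -> x / z <= y.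
Proof. intros Hz H. apply Rmult_le_reg_r with z; auto. unfold Rdiv. rewrite Rmult_assoc, Rinv_l; lra. Qed.

Lemma pow_le_pow_of_le_1 x a b : 0 <= x <= 1 -> (a <= b)%nat -> x ^ b <= x ^ a.
Proof.
  intros Hx Hab. induction Hab as [|b Hab IH]; [lra|]. simpl.
  assert (0 <= x ^ b) by (apply pow_le; lra). nra.
Qed.

Lemma ln_le x y : 0 < x -> x <= y -> ln x <= ln y.
Proof.
  intros Hx Hxy. destruct (Rle_lt_or_eq_dec x y Hxy) as [Hlt | ->]; [|lra].
  apply Rlt_le, ln_increasing; lra.
Qed.

Lemma ln_div x y : 0 < x -> 0 < y -> ln (x / y) = ln x - ln y.
Proof.
  intros Hx Hy. unfold Rdiv.
  rewrite ln_mult, ln_Rinv; auto using Rinv_0_lt_compat; ring.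
Qed.

Lemma ln_le_sub_1 y : 0 < y -> ln y <= y - 1.
Proof. intros Hy. pose proof (exp_ineq1_le (ln y)) as H. rewrite exp_ln in H; lra. Qed.

Lemma one_sub_inv_le_ln y : 0 < y -> 1 - / y <= ln y.
Proof.
  intros Hy. pose proof (ln_le_sub_1 (/ y) (Rinv_0_lt_compat _ Hy)) as H.
  rewrite ln_Rinv in H; lra.
Qed.

Lemma ln_succ_sub_le z : 0 < z -> ln (z + 1) - ln z <= 1 / z.
Proof.
  intros Hz. rewrite <- ln_div by lra.
  replace (1 / z) with ((z + 1) / z - 1) by (field; lra).
  apply ln_le_sub_1, Rdiv_lt_0_compat; lra.
Qed.

Lemma ln_succ_sub_ge y : 0 < y -> 1 / (y + 1) <= ln (y + 1) - ln y.
Proof.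
  intros Hy. rewrite <- ln_div by lra.
  replace (1 / (y + 1)) with (1 - / ((y + 1) / y)) by (field; lra).
  apply one_sub_inv_le_ln, Rdiv_lt_0_compat; lra.
Qed.

Definition log_gain (a m : R) (l : nat) : R := fsum l (fun i => ln (1 + m / (a + INR i))).
Definition log_loss (a k : R) (l : nat) : R := fsum l (fun i => ln (1 - k / (a + INR i))).

Lemma log_gain_ge a m l :
  0 < a -> 0 < m -> m * (ln (a + m + INR l) - ln (a + m)) <= log_gain a m l.
Proof.
  intros Ha Hm. induction l as [|l IH].
  - unfold log_gain. simpl. rewrite Rplus_0_r. lra.
  - unfold log_gain in *. cbn [fsum]. rewrite S_INR. pose proof (pos_INR l).
    set (z := a + m + INR l) in IH.
    replace (a + m + (INR l + 1)) with (z + 1) by (unfold z; ring).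
    assert (Hup : m * (ln (z + 1) - ln z) <= m * (1 / z))
      by (apply Rmult_le_compat_l, ln_succ_sub_le; unfold z; lra).
    assert (Hlow : 1 - / (1 + m / (a + INR l)) <= ln (1 + m / (a + INR l))).
    { apply one_sub_inv_le_ln. assert (0 < m / (a + INR l)) by (apply Rdiv_lt_0_compat; lra). lra. }
    replace (1 - / (1 + m / (a + INR l))) with (m * (1 / z)) in Hlow by (unfold z; field; lra).
    lra.
Qed.

Lemma harmonic_sum_le b k :
  0 < b -> fsum k (fun i => 1 / (b + INR i)) <= 1 / b + (ln (b + INR k) - ln b).
Proof.
  intros Hb.
  assert (Hsucc : forall k, fsum (S k) (fun i => 1 / (b + INR i)) <= 1 / b + (ln (b + INR k) - ln b)).
  { induction k0 as [|k0 IH].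
    - simpl. rewrite Rplus_0_r. lra.
    - cbn [fsum] in *. rewrite S_INR. pose proof (pos_INR k0).
      pose proof (ln_succ_sub_ge (b + INR k0) ltac:(lra)).
      replace (b + (INR k0 + 1)) with (b + INR k0 + 1) by ring. lra. }
  destruct k as [|k].
  - simpl. rewrite Rplus_0_r. assert (0 < 1 / b) by (apply Rdiv_lt_0_compat; lra). lra.
  - pose proof (Hsucc k). pose proof (pos_INR k). rewrite S_INR.
    assert (ln (b + INR k) <= ln (b + (INR k + 1))) by (apply ln_le; lra). lra.
Qed.

Lemma log_loss_ge a k l : 0 < k -> k < a ->
  - k * (1 / (a - k) + (ln (a - k + INR l) - ln (a - k))) <= log_loss a k l.
Proof.
  intros Hk Hka. apply Rle_trans with (- k * fsum l (fun i => 1 / (a - k + INR i))).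
  - pose proof (harmonic_sum_le (a - k) l ltac:(lra)). nra.
  - rewrite <- fsum_scal. apply fsum_le. intros i _. pose proof (pos_INR i).
    assert (Hpos : 0 < 1 - k / (a + INR i)).
    { assert (k / (a + INR i) < 1); [|lra].
      apply Rmult_lt_reg_r with (a + INR i); [lra|].
      unfold Rdiv; rewrite Rmult_assoc, Rinv_l; lra. }
    pose proof (one_sub_inv_le_ln _ Hpos) as Hln.
    replace (1 - / (1 - k / (a + INR i))) with (- k * (1 / (a - k + INR i))) in Hln by (field; lra).
    exact Hln.
Qed.

(* Once the second urn is large and exceeds a fixed fraction [c] of the first one,
   [m ln a_j - k ln a_0 >= (m - k) ln a_j + k ln c] is large because [m > k]. *)
Lemma log_gain_loss_unbounded a0 aj k m c Y :
  0 < k -> k < a0 -> k < m -> 0 < aj -> 0 < c ->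
  exists L, 0 < L /\ forall i l : nat, L <= aj + INR l -> c * (a0 + INR i) < aj + INR l ->
    Y <= log_gain aj m l + log_loss a0 k i.
Proof.
  intros Hk Hka Hkm Haj Hc. set (b := a0 - k).
  set (C := - m * ln (aj + m) - k * (1 / b) + k * ln c + k * ln b).
  set (Z := (Y - C) / (m - k)). exists (exp Z). split; [apply exp_pos|].
  intros i l HL Hc_lt. pose proof (pos_INR i). pose proof (pos_INR l).
  set (X := aj + m + INR l).
  assert (HX : 0 < X) by (pose proof (exp_pos Z); unfold X; lra).
  assert (HZ : Z <= ln X) by (rewrite <- (ln_exp Z); apply ln_le; [apply exp_pos | unfold X; lra]).
  pose proof (log_gain_ge aj m l Haj ltac:(lra)) as Hgain. fold X in Hgain.
  pose proof (log_loss_ge a0 k i Hk Hka) as Hloss. fold b in Hloss.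
  assert (Hln : ln (b + INR i) <= ln X - ln c).
  { rewrite <- ln_div by lra. apply ln_le; [unfold b; lra|].
    apply Rle_div_of_mult_le; auto. unfold b, X. nra. }
  assert (HmkZ : (m - k) * Z = Y - C) by (unfold Z; field; lra).
  assert ((m - k) * Z <= (m - k) * ln X) by (apply Rmult_le_compat_l; lra).
  assert (- k * ln (b + INR i) >= - k * (ln X - ln c)) by nra.
  unfold C in HmkZ. lra.
Qed.

Definition next_mean (n : nat) (v A q : nat -> R) (F : (nat -> nat) -> R) (d : nat -> nat) : R :=
  (1 - lam n v A q d) * F d + fsum n (fun i => tryp n v A d i * q i * F (incr d i)).

Lemma fsum_tryp_q n v A q d : fsum n (fun i => tryp n v A d i * q i) = lam n v A q d.
Proof. unfold lam. rewrite <- fsum_div. apply fsum_ext; intros. unfold tryp, Rdiv; ring. Qed.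

Lemma next_mean_incr n v A q F X d :
  (forall i, (i < n)%nat -> F (incr d i) = F d + X i) ->
  next_mean n v A q F d = F d + fsum n (fun i => tryp n v A d i * q i * X i).
Proof.
  intros HF. unfold next_mean.
  rewrite (fsum_ext n _ (fun i => F d * (tryp n v A d i * q i) + tryp n v A d i * q i * X i))
    by (intros i Hi; rewrite HF; auto; ring).
  rewrite fsum_add, fsum_scal, fsum_tryp_q. ring.
Qed.

Lemma next_mean_add n v A q F G d :
  next_mean n v A q (fun e => F e + G e) d = next_mean n v A q F d + next_mean n v A q G d.
Proof.
  unfold next_mean.
  rewrite (fsum_ext n _ (fun i => tryp n v A d i * q i * F (incr d i)
                                + tryp n v A d i * q i * G (incr d i))) by (intros; ring).
  rewrite fsum_add. ring.
Qed.

Lemma next_mean_scal n v A q c F d :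
  next_mean n v A q (fun e => c * F e) d = c * next_mean n v A q F d.
Proof.
  unfold next_mean.
  rewrite (fsum_ext n _ (fun i => c * (tryp n v A d i * q i * F (incr d i)))) by (intros; ring).
  rewrite fsum_scal. ring.
Qed.

Lemma next_mean_fsum n v A q m (F : nat -> (nat -> nat) -> R) d :
  next_mean n v A q (fun e => fsum m (fun j => F j e)) d
  = fsum m (fun j => next_mean n v A q (F j) d).
Proof.
  induction m as [|m IH].
  - unfold next_mean. simpl. rewrite (fsum_ext n _ (fun _ => 0)) by (intros; ring).
    rewrite fsum_zero. ring.
  - cbn [fsum]. now rewrite next_mean_add, IH.
Qed.

(* An invariant of the reachable states; it keeps [lam] away from 0 when the last product
   has quality 0. *)
Definition zero_quality_unsold (n : nat) (q : nat -> R) (d : nat -> nat) : Prop :=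
  forall i, (i < n)%nat -> q i = 0 -> d i = 0%nat.

Section Market.

Variables (n : nat) (v A q : nat -> R).
Hypothesis n_pos : (1 <= n)%nat.
Hypothesis v_antitone : forall i j, (i <= j)%nat -> (j < n)%nat -> v j <= v i.
Hypothesis v_pos : forall i, (i < n)%nat -> 0 < v i.
Hypothesis A_pos : forall i, (i < n)%nat -> 0 < A i.
Hypothesis q0_le_1 : q 0%nat <= 1.
Hypothesis q_decr : forall i, (S i < n)%nat -> q (S i) < q i.
Hypothesis q_last_nonneg : 0 <= q (pred n).

Lemma q_antitone i j : (i <= j)%nat -> (j < n)%nat -> q j <= q i.
Proof.
  intros Hij. induction Hij as [|j Hij IH]; intros Hj; [lra|].
  pose proof (q_decr j Hj). pose proof (IH ltac:(lia)). lra.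
Qed.

Lemma q_nonneg i : (i < n)%nat -> 0 <= q i.
Proof. intros Hi. pose proof (q_antitone i (pred n) ltac:(lia) ltac:(lia)). lra. Qed.

Lemma appeal_pos d i : (i < n)%nat -> 0 < appeal A d i.
Proof. intros Hi. unfold appeal. pose proof (pos_INR (d i)). pose proof (A_pos i Hi). lra. Qed.

Lemma weight_pos d i : (i < n)%nat -> 0 < v i * appeal A d i.
Proof. intros Hi. apply Rmult_lt_0_compat; [apply v_pos | apply appeal_pos]; auto. Qed.

Lemma total_weight_pos d : 0 < fsum n (fun j => v j * appeal A d j).
Proof. apply fsum_pos; auto using weight_pos. Qed.

Lemma tryp_nonneg d i : (i < n)%nat -> 0 <= tryp n v A d i.
Proof.
  intros Hi. unfold tryp. apply Rlt_le, Rdiv_lt_0_compat; auto using weight_pos, total_weight_pos.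
Qed.

Lemma tryp_q_nonneg d i : (i < n)%nat -> 0 <= tryp n v A d i * q i.
Proof. intros Hi. apply Rmult_le_pos; auto using tryp_nonneg, q_nonneg. Qed.

Lemma fsum_tryp d : fsum n (fun i => tryp n v A d i) = 1.
Proof. pose proof (total_weight_pos d). unfold tryp. rewrite fsum_div. field. lra. Qed.

Lemma q0_sub_lam d : q 0%nat - lam n v A q d = fsum n (fun i => tryp n v A d i * (q 0%nat - q i)).
Proof.
  rewrite <- fsum_tryp_q.
  rewrite (fsum_ext n (fun i => tryp n v A d i * (q 0%nat - q i))
                      (fun i => q 0%nat * tryp n v A d i + -1 * (tryp n v A d i * q i)))
    by (intros; ring).
  rewrite fsum_add, !fsum_scal, fsum_tryp. ring.
Qed.

Lemma lam_le_q0 d : lam n v A q d <= q 0%nat.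
Proof.
  enough (0 <= q 0%nat - lam n v A q d) by lra. rewrite q0_sub_lam.
  apply fsum_nonneg. intros i Hi. pose proof (q_antitone 0 i ltac:(lia) Hi).
  apply Rmult_le_pos; auto using tryp_nonneg; lra.
Qed.

Lemma bad_gap eps d : bad n v A q eps d = true -> eps < q 0%nat - lam n v A q d.
Proof.
  unfold bad. destruct (Rlt_dec _ _) as [Hlt|]; [intros _ | discriminate].
  pose proof (lam_le_q0 d). rewrite Rabs_left1 in Hlt; lra.
Qed.

(* Optional stopping, unrolled along the recursion of [badp]. *)
Lemma badp_le_supermartingale eps t0 (Phi : nat -> (nat -> nat) -> R) :
  (forall s d, zero_quality_unsold n q d -> 0 <= Phi s d) ->
  (forall s d, zero_quality_unsold n q d -> (t0 <= s)%nat -> bad n v A q eps d = true ->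
     1 <= Phi s d) ->
  (forall s d, zero_quality_unsold n q d -> next_mean n v A q (Phi (S s)) d <= Phi s d) ->
  forall k s d, zero_quality_unsold n q d -> badp n v A q eps t0 k s d <= Phi s d.
Proof.
  intros Phi_nonneg Phi_bad Phi_super k.
  induction k as [|k IH]; intros s d Hd; simpl; [auto|].
  destruct (Nat.leb_spec t0 s); destruct (bad n v A q eps d) eqn:Hbad; simpl; auto.
  all: apply Rle_trans with (next_mean n v A q (Phi (S s)) d); auto.
  all: apply Rplus_le_compat;
    [apply Rmult_le_compat_l; [pose proof (lam_le_q0 d); lra | auto] |].
  all: apply fsum_le; intros i Hi; destruct (Req_dec (q i) 0) as [Hq|Hq];
    [rewrite Hq; lra | apply Rmult_le_compat_l; auto using tryp_q_nonneg].
  all: apply IH; intros j Hj Hqj; unfold incr;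
    destruct (Nat.eqb_spec j i); [subst; contradiction | auto].
Qed.

Lemma lam_ge_q_last d : q (pred n) <= lam n v A q d.
Proof.
  rewrite <- fsum_tryp_q.
  apply Rle_trans with (fsum n (fun i => q (pred n) * tryp n v A d i)).
  - rewrite fsum_scal, fsum_tryp. lra.
  - apply fsum_le. intros i Hi. rewrite Rmult_comm.
    apply Rmult_le_compat_l; [auto using tryp_nonneg | apply q_antitone; lia].
Qed.

Lemma lam_ge_unsold d : (2 <= n)%nat -> q (pred n) = 0 -> d (pred n) = 0%nat ->
  let a := v 0%nat * A 0%nat in let C := v (pred n) * A (pred n) in
  q (pred (pred n)) * a / (a + C) <= lam n v A q d.
Proof.
  intros Hn Hq_last Hd_last a C.
  set (l := pred n) in *. set (r := pred l).
  assert (Hr : 0 < q r).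
  { pose proof (q_decr r ltac:(unfold r, l; lia)) as Hlt.
    replace (S r) with l in Hlt by (unfold r, l; lia). lra. }
  assert (Ha : 0 < a) by (apply Rmult_lt_0_compat; [apply v_pos | apply A_pos]; lia).
  assert (HC : 0 < C) by (apply Rmult_lt_0_compat; [apply v_pos | apply A_pos]; unfold l; lia).
  unfold lam. rewrite !(fsum_pred n) by lia. fold l.
  replace (appeal A d l) with (A l) by (unfold appeal; rewrite Hd_last; simpl; ring).
  fold C. rewrite Hq_last, Rmult_0_r, Rplus_0_r.
  set (F := fsum l (fun j => v j * appeal A d j)).
  set (X := fsum l (fun i => v i * appeal A d i * q i)).
  assert (HX : q r * F <= X).
  { unfold F, X. rewrite <- fsum_scal. apply fsum_le. intros i Hi.
    pose proof (q_antitone i r ltac:(unfold r; lia) ltac:(unfold r, l; lia)).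
    pose proof (weight_pos d i ltac:(unfold l in Hi; lia)). nra. }
  assert (HF : a <= F).
  { apply Rle_trans with (v 0%nat * appeal A d 0%nat).
    - pose proof (pos_INR (d 0%nat)). pose proof (v_pos 0 ltac:(lia)).
      unfold a, appeal. nra.
    - apply (fsum_term_le l (fun j => v j * appeal A d j));
        [intros i Hi; apply Rlt_le, weight_pos | ]; unfold l in *; lia. }
  apply Rle_div_of_mult_le; [lra|].
  replace (q r * a / (a + C) * (F + C)) with (q r * F - q r * C * (F - a) / (a + C)) by (field; lra).
  assert (0 <= q r * C * (F - a) / (a + C)).
  { unfold Rdiv. apply Rmult_le_pos;
      [apply Rmult_le_pos; [apply Rmult_le_pos|] | apply Rlt_le, Rinv_0_lt_compat]; lra. }
  lra.
Qed.

Lemma lam_uniform_lower_bound : (2 <= n)%nat ->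
  exists lm, 0 < lm /\ forall d, zero_quality_unsold n q d -> lm <= lam n v A q d.
Proof.
  intros Hn. destruct (Req_dec (q (pred n)) 0) as [Hq_last|Hq_last].
  - set (a := v 0%nat * A 0%nat). set (C := v (pred n) * A (pred n)).
    exists (q (pred (pred n)) * a / (a + C)). split.
    + pose proof (q_decr (pred (pred n)) ltac:(lia)).
      replace (S (pred (pred n))) with (pred n) in * by lia.
      assert (0 < a) by (apply Rmult_lt_0_compat; [apply v_pos | apply A_pos]; lia).
      assert (0 < C) by (apply Rmult_lt_0_compat; [apply v_pos | apply A_pos]; lia).
      apply Rdiv_lt_0_compat; [apply Rmult_lt_0_compat|]; lra.
    + intros d Hd. apply lam_ge_unsold; auto. apply Hd; auto; lia.
  - exists (q (pred n)). split; [lra|]. intros d _. apply lam_ge_q_last.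
Qed.

(* A gap [eps] between [lam] and [q 0] needs weight [eps] outside product 0, so some
   product [j >= 1] must be more appealing than [eps / n] times product 0. *)
Lemma bad_appeal_witness eps d : 0 < eps -> bad n v A q eps d = true ->
  exists j, (1 <= j < n)%nat /\ eps / INR n * appeal A d 0%nat < appeal A d j.
Proof.
  intros Heps Hbad. apply bad_gap in Hbad. rewrite q0_sub_lam in Hbad.
  set (c := eps / INR n) in *.
  assert (Hn_R : 1 <= INR n) by (replace 1 with (INR 1) by reflexivity; apply le_INR; lia).
  destruct (classic (exists j, (1 <= j < n)%nat /\ c * appeal A d 0%nat < appeal A d j))
    as [Hex|Hno]; [exact Hex | exfalso].
  set (W := fsum n (fun j => v j * appeal A d j)) in *.
  pose proof (total_weight_pos d) as HW. fold W in HW.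
  set (s0 := v 0%nat * appeal A d 0%nat / W).
  assert (Hs0 : 0 < s0 <= 1).
  { split; [apply Rdiv_lt_0_compat; [apply weight_pos; lia | exact HW]|].
    apply Rdiv_le_of_le_mult; [lra|]. rewrite Rmult_1_l.
    apply (fsum_term_le n (fun j => v j * appeal A d j)); [|lia].
    intros i Hi. apply Rlt_le, weight_pos; auto. }
  assert (Hc : 0 < c) by (apply Rdiv_lt_0_compat; lra).
  assert (Hterm : forall i, (i < n)%nat -> tryp n v A d i * (q 0%nat - q i) <= c * s0).
  { intros i Hi. destruct (Nat.eq_dec i 0) as [->|Hi0].
    { rewrite Rminus_diag, Rmult_0_r. apply Rmult_le_pos; lra. }
    assert (Happ : appeal A d i <= c * appeal A d 0%nat)
      by (apply Rnot_lt_le; intros Hlt; apply Hno; exists i; split; [lia | exact Hlt]).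
    pose proof (q_nonneg i Hi). pose proof (tryp_nonneg d i Hi).
    pose proof (v_antitone 0 i ltac:(lia) Hi). pose proof (v_pos i Hi). pose proof (appeal_pos d i Hi).
    apply Rle_trans with (tryp n v A d i); [nra|].
    unfold tryp, s0. fold W. replace (c * (v 0%nat * appeal A d 0%nat / W))
      with (v 0%nat * (c * appeal A d 0%nat) / W) by (field; lra).
    unfold Rdiv. apply Rmult_le_compat_r; [apply Rlt_le, Rinv_0_lt_compat; lra|].
    apply Rmult_le_compat; lra. }
  pose proof (fsum_le_const n _ (c * s0) Hterm).
  replace (INR n * (c * s0)) with (eps * s0) in * by (unfold c; field; lra).
  nra.
Qed.

(* Any [kap] in [(0, A 0)] would do. *)
Definition kap : R := A 0%nat / 2.
Definition rho (j : nat) : R := v j * q j / (v 0%nat * q 0%nat).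
Definition urn_exponent (j : nat) : R := 2 * kap / (1 + rho j).

(* [urn_potential j d] is [prod_(i < d j) (1 + m_j / (A_j + i)) * prod_(i < d 0) (1 - kap / (A_0 + i))]
   with [m_j = urn_exponent j]: a purchase of [j] multiplies it by [1 + m_j / a_j], one of
   product 0 by [1 - kap / a_0].  The exponent [m_j] makes the drift
   [m_j v_j q_j - kap v_0 q_0] nonpositive, and exceeds [kap] because [rho j < 1]. *)
Definition urn_potential (j : nat) (d : nat -> nat) : R :=
  exp (log_gain (A j) (urn_exponent j) (d j) + log_loss (A 0%nat) kap (d 0%nat)).

Lemma q0_gt_q j : (1 <= j < n)%nat -> 0 < q 0%nat /\ q j < q 0%nat.
Proof.
  intros Hj. pose proof (q_decr 0 ltac:(lia)). pose proof (q_antitone 1 j ltac:(lia) ltac:(lia)).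
  pose proof (q_nonneg j ltac:(lia)). lra.
Qed.

Lemma rho_lt_1 j : (1 <= j < n)%nat -> 0 <= rho j < 1.
Proof.
  intros Hj. destruct (q0_gt_q j Hj) as [Hq0 Hqj]. pose proof (q_nonneg j ltac:(lia)).
  pose proof (v_pos 0 ltac:(lia)). pose proof (v_pos j ltac:(lia)).
  pose proof (v_antitone 0 j ltac:(lia) ltac:(lia)).
  assert (HP0 : 0 < v 0%nat * q 0%nat) by (apply Rmult_lt_0_compat; lra).
  unfold rho. split.
  - apply Rmult_le_pos; [nra | apply Rlt_le, Rinv_0_lt_compat; lra].
  - apply Rmult_lt_reg_r with (v 0%nat * q 0%nat); auto.
    unfold Rdiv. rewrite Rmult_assoc, Rinv_l by lra. nra.
Qed.

Lemma kap_pos : 0 < kap /\ kap < A 0%nat.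
Proof. pose proof (A_pos 0 ltac:(lia)). unfold kap. lra. Qed.

Lemma kap_lt_urn_exponent j : (1 <= j < n)%nat -> kap < urn_exponent j.
Proof.
  intros Hj. destruct (rho_lt_1 j Hj). destruct kap_pos. unfold urn_exponent.
  apply Rmult_lt_reg_r with (1 + rho j); [lra|].
  unfold Rdiv. rewrite Rmult_assoc, Rinv_l by lra. nra.
Qed.

Lemma urn_potential_incr j d i : (1 <= j < n)%nat -> (i < n)%nat ->
  urn_potential j (incr d i) = urn_potential j d
    + ((if Nat.eqb i 0 then urn_potential j d * (- kap / appeal A d 0%nat) else 0)
       + (if Nat.eqb i j then urn_potential j d * (urn_exponent j / appeal A d j) else 0)).
Proof.
  intros Hj Hi. pose proof (appeal_pos d 0 ltac:(lia)) as Ha0.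
  pose proof (appeal_pos d j ltac:(lia)) as Haj. destruct kap_pos as [Hk HkA].
  pose proof (kap_lt_urn_exponent j Hj) as Hm. unfold appeal in Ha0, Haj.
  unfold urn_potential, incr, appeal.
  assert (Hj0 : Nat.eqb j 0 = false) by (apply Nat.eqb_neq; lia).
  assert (H0j : Nat.eqb 0 j = false) by (apply Nat.eqb_neq; lia).
  destruct (Nat.eq_dec i 0) as [->|Hi0]; [|destruct (Nat.eq_dec i j) as [->|Hij]].
  - rewrite Hj0, H0j, Nat.eqb_refl. unfold log_loss at 1. cbn [fsum].
    fold (log_loss (A 0%nat) kap (d 0%nat)).
    rewrite <- Rplus_assoc, exp_plus, exp_ln; [field; lra|].
    assert (kap / (A 0%nat + INR (d 0%nat)) < 1); [|lra].
    apply Rmult_lt_reg_r with (A 0%nat + INR (d 0%nat)); [lra|].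
    unfold Rdiv; rewrite Rmult_assoc, Rinv_l; [|lra]. pose proof (pos_INR (d 0%nat)). lra.
  - rewrite Hj0, H0j, Nat.eqb_refl. unfold log_gain at 1. cbn [fsum].
    fold (log_gain (A j) (urn_exponent j) (d j)).
    match goal with |- exp (?x + ?y + ?z) = _ => replace (x + y + z) with ((x + z) + y) by ring end.
    rewrite exp_plus, exp_ln; [field; lra|].
    assert (0 < urn_exponent j / (A j + INR (d j))) by (apply Rdiv_lt_0_compat; lra). lra.
  - replace (Nat.eqb 0 i) with false by (symmetry; apply Nat.eqb_neq; lia).
    replace (Nat.eqb j i) with false by (symmetry; apply Nat.eqb_neq; lia).
    replace (Nat.eqb i 0) with false by (symmetry; apply Nat.eqb_neq; lia).
    replace (Nat.eqb i j) with false by (symmetry; apply Nat.eqb_neq; lia). ring.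
Qed.

Lemma urn_potential_supermartingale j d : (1 <= j < n)%nat ->
  next_mean n v A q (urn_potential j) d <= urn_potential j d.
Proof.
  intros Hj. rewrite (next_mean_incr _ _ _ _ _ _ d (fun i => urn_potential_incr j d i Hj)).
  set (G := urn_potential j d). set (a0 := appeal A d 0%nat). set (aj := appeal A d j).
  set (m := urn_exponent j).
  rewrite (fsum_ext n (fun i => tryp n v A d i * q i
      * ((if Nat.eqb i 0 then G * (- kap / a0) else 0) + (if Nat.eqb i j then G * (m / aj) else 0)))
    (fun i => (if Nat.eqb i 0 then tryp n v A d 0 * q 0%nat * (G * (- kap / a0)) else 0)
     + (if Nat.eqb i j then tryp n v A d j * q j * (G * (m / aj)) else 0))).
  2:{ intros i Hi. destruct (Nat.eqb_spec i 0); destruct (Nat.eqb_spec i j); subst; try lia; ring. }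
  rewrite fsum_add, !fsum_delta by lia. fold G.
  pose proof (appeal_pos d 0 ltac:(lia)) as Ha0. pose proof (appeal_pos d j ltac:(lia)) as Haj.
  fold a0 in Ha0. fold aj in Haj. destruct kap_pos as [Hk _].
  destruct (q0_gt_q j Hj) as [Hq0 Hqj]. pose proof (q_nonneg j ltac:(lia)).
  pose proof (v_pos 0 ltac:(lia)). pose proof (v_pos j ltac:(lia)).
  pose proof (total_weight_pos d) as HW.
  set (W := fsum n (fun i => v i * appeal A d i)) in *.
  assert (HG : 0 < G) by apply exp_pos.
  set (P0 := v 0%nat * q 0%nat). set (Pj := v j * q j).
  assert (HP0 : 0 < P0) by (apply Rmult_lt_0_compat; lra).
  assert (HPj : 0 <= Pj) by (apply Rmult_le_pos; lra).
  assert (Hdrift : tryp n v A d 0 * q 0%nat * (G * (- kap / a0)) + tryp n v A d j * q j * (G * (m / aj))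
     = G / W * (kap * P0 * (Pj - P0) / (P0 + Pj))).
  { unfold tryp, m, urn_exponent, rho. fold W a0 aj. unfold P0, Pj in *.
    field. repeat split; lra. }
  rewrite Hdrift.
  assert (Pj <= P0).
  { destruct (rho_lt_1 j Hj) as [_ Hr]. unfold rho in Hr. fold P0 Pj in Hr.
    apply Rmult_le_reg_r with (/ P0); [apply Rinv_0_lt_compat; lra|].
    rewrite Rinv_r by lra. unfold Rdiv in Hr. lra. }
  assert (kap * P0 * (Pj - P0) / (P0 + Pj) <= 0).
  { apply Rdiv_le_of_le_mult; [lra|]. rewrite Rmult_0_l.
    assert (0 < kap * P0) by (apply Rmult_lt_0_compat; auto). nra. }
  assert (0 < G / W) by (apply Rdiv_lt_0_compat; auto). nra.
Qed.

Lemma urn_potential_zero j : urn_potential j (fun _ => 0%nat) = 1.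
Proof. unfold urn_potential, log_gain, log_loss. simpl. rewrite Rplus_0_r. apply exp_0. Qed.

Lemma urn_potential_large c K : 0 < c -> 0 < K ->
  exists L, 0 < L /\ forall j d, (1 <= j < n)%nat -> L <= appeal A d j ->
    c * appeal A d 0%nat < appeal A d j -> K <= urn_potential j d.
Proof.
  intros Hc HK.
  destruct (uniform_threshold n (fun j L => forall d, (1 <= j)%nat -> L <= appeal A d j ->
     c * appeal A d 0%nat < appeal A d j -> K <= urn_potential j d)) as [L [HL HPL]].
  - intros j L L' HP HLL' d Hj H1 H2. apply HP; auto; lra.
  - intros j Hj. destruct (Nat.eq_dec j 0) as [->|Hj0]; [exists 1; split; [lra | intros; lia]|].
    destruct kap_pos as [Hk HkA]. pose proof (A_pos j Hj).
    destruct (log_gain_loss_unbounded (A 0%nat) (A j) kap (urn_exponent j) c (ln K))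
      as [L [HL HLbig]]; auto using kap_lt_urn_exponent with arith.
    { apply kap_lt_urn_exponent; lia. }
    exists L. split; [exact HL|]. intros d _ H1 H2.
    unfold urn_potential. rewrite <- (exp_ln K) by exact HK.
    destruct (Rle_lt_or_eq_dec _ _ (HLbig (d 0%nat) (d j) H1 H2)) as [Hlt | <-];
      [apply Rlt_le, exp_increasing, Hlt | lra].
  - exists L. split; [exact HL|]. intros j d Hj. apply HPL; lia.
Qed.

(* In the second case every appeal is below [L / c + L], which caps the number of sales. *)
Lemma bad_state_cases eps L M d : 0 < eps -> 0 < L ->
  INR n * (L / (eps / INR n) + L) <= INR M -> bad n v A q eps d = true ->
  (exists j, (1 <= j < n)%nat /\ L <= appeal A d j /\ eps / INR n * appeal A d 0%nat < appeal A d j)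
  \/ (nat_fsum n d <= M)%nat.
Proof.
  intros Heps HL HM Hbad. set (c := eps / INR n) in *.
  assert (Hc : 0 < c) by (apply Rdiv_lt_0_compat; [lra | apply lt_0_INR; lia]).
  destruct (classic (exists j, (1 <= j < n)%nat /\ L <= appeal A d j /\ c * appeal A d 0%nat < appeal A d j))
    as [Hbig|Hsmall]; [left; exact Hbig | right].
  destruct (bad_appeal_witness eps d Heps Hbad) as [j [Hj Hcj]]. fold c in Hcj.
  assert (Haj : appeal A d j < L)
    by (apply Rnot_le_lt; intros HLj; apply Hsmall; exists j; auto).
  assert (Happ : forall i, (i < n)%nat -> appeal A d i <= L / c + L).
  { intros i Hi. assert (0 < L / c) by (apply Rdiv_lt_0_compat; auto).
    destruct (Nat.eq_dec i 0) as [->|Hi0].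
    - assert (appeal A d 0%nat <= L / c) by (apply Rle_div_of_mult_le; lra). lra.
    - destruct (Rlt_le_dec (appeal A d i) L); [lra|].
      destruct (Rlt_le_dec (c * appeal A d 0%nat) (appeal A d i)) as [Hlt|]; [|lra].
      exfalso. apply Hsmall. exists i. repeat split; auto; lia. }
  apply INR_le. rewrite INR_nat_fsum. apply Rle_trans with (INR n * (L / c + L)); auto.
  apply fsum_le_const. intros i Hi. pose proof (Happ i Hi). pose proof (A_pos i Hi).
  unfold appeal in *. lra.
Qed.

(* Each step is a sale with probability at least [lm], so with [mu = 1 - lm / 2] the
   factor [/ 2] per sale beats the factor [/ mu] per step. *)
Definition few_sales_bound (mu : R) (t0 M s : nat) (d : nat -> nat) : R :=
  (/ 2) ^ nat_fsum n d * mu ^ t0 / ((/ 2) ^ M * mu ^ s).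

Lemma few_sales_bound_nonneg mu t0 M s d : 0 < mu -> 0 <= few_sales_bound mu t0 M s d.
Proof.
  intros Hmu. unfold few_sales_bound.
  apply Rlt_le, Rdiv_lt_0_compat; apply Rmult_lt_0_compat; apply pow_lt; lra.
Qed.

Lemma few_sales_bound_ge_1 mu t0 M s d : 0 < mu <= 1 -> (t0 <= s)%nat -> (nat_fsum n d <= M)%nat ->
  1 <= few_sales_bound mu t0 M s d.
Proof.
  intros Hmu Hs Hd. unfold few_sales_bound.
  apply Rle_div_of_mult_le; [apply Rmult_lt_0_compat; apply pow_lt; lra|]. rewrite Rmult_1_l.
  apply Rmult_le_compat; try (apply pow_le; lra); apply pow_le_pow_of_le_1; auto; lra.
Qed.

Lemma few_sales_bound_supermartingale lm t0 M s d : 0 < lm <= lam n v A q d -> lm < 2 ->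
  next_mean n v A q (few_sales_bound (1 - lm / 2) t0 M (S s)) d
  <= few_sales_bound (1 - lm / 2) t0 M s d.
Proof.
  intros Hlm Hlm2. set (mu := 1 - lm / 2). assert (Hmu : 0 < mu) by (unfold mu; lra).
  set (F := few_sales_bound mu t0 M (S s) d).
  rewrite (next_mean_incr _ _ _ _ _ (fun _ => - F / 2)).
  2:{ intros i Hi. unfold F, few_sales_bound. rewrite nat_fsum_incr by auto. simpl pow.
      field. split; [apply pow_nonzero; lra | split; [lra | apply pow_nonzero; lra]]. }
  rewrite (fsum_ext n _ (fun i => (- F / 2) * (tryp n v A d i * q i))) by (intros; ring).
  rewrite fsum_scal, fsum_tryp_q.
  assert (HF : 0 <= F) by (apply few_sales_bound_nonneg; auto).
  replace (few_sales_bound mu t0 M s d) with (F * mu)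
    by (unfold F, few_sales_bound; simpl pow; field; repeat split; try apply pow_nonzero; lra).
  assert (0 <= F * (lam n v A q d - lm)) by (apply Rmult_le_pos; lra).
  fold F. unfold mu. lra.
Qed.

Lemma few_sales_bound_start mu t0 M eta : 0 < mu -> mu ^ t0 <= eta * mu * (/ 2) ^ M ->
  few_sales_bound mu t0 M 1 (fun _ => 0%nat) <= eta.
Proof.
  intros Hmu Ht0. unfold few_sales_bound. rewrite nat_fsum_zero, pow_O, pow_1.
  apply Rdiv_le_of_le_mult; [apply Rmult_lt_0_compat; [apply pow_lt|]; lra|]. lra.
Qed.

Definition urn_bound (K : R) (d : nat -> nat) : R :=
  / K * fsum (pred n) (fun j => urn_potential (S j) d).

Lemma urn_bound_nonneg K d : 0 < K -> 0 <= urn_bound K d.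
Proof.
  intros HK. unfold urn_bound. apply Rmult_le_pos; [apply Rlt_le, Rinv_0_lt_compat; auto|].
  apply fsum_nonneg. intros. apply Rlt_le, exp_pos.
Qed.

Lemma urn_bound_ge_1 K d j : 0 < K -> (1 <= j < n)%nat -> K <= urn_potential j d ->
  1 <= urn_bound K d.
Proof.
  intros HK Hj HG. unfold urn_bound.
  assert (urn_potential j d <= fsum (pred n) (fun i => urn_potential (S i) d)).
  { destruct j as [|j]; [lia|].
    apply (fsum_term_le (pred n) (fun i => urn_potential (S i) d)); [|lia].
    intros. apply Rlt_le, exp_pos. }
  apply Rmult_le_reg_l with K; auto. rewrite <- Rmult_assoc, Rinv_r by lra. lra.
Qed.

Lemma urn_bound_supermartingale K d : 0 < K ->
  next_mean n v A q (urn_bound K) d <= urn_bound K d.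
Proof.
  intros HK. unfold urn_bound. rewrite next_mean_scal, next_mean_fsum.
  apply Rmult_le_compat_l; [apply Rlt_le, Rinv_0_lt_compat; auto|].
  apply fsum_le. intros i Hi. apply urn_potential_supermartingale. lia.
Qed.

Lemma urn_bound_zero K : urn_bound K (fun _ => 0%nat) = / K * INR (pred n).
Proof.
  unfold urn_bound. rewrite (fsum_ext _ _ (fun _ => 1)) by (intros; apply urn_potential_zero).
  rewrite <- (Rmult_1_r (INR (pred n))). f_equal.
  clear. induction (pred n) as [|k IH]; [simpl; ring | rewrite S_INR; cbn [fsum]; rewrite IH; ring].
Qed.

Lemma zero_quality_unsold_zero : zero_quality_unsold n q (fun _ => 0%nat).
Proof. intros i _ _. reflexivity. Qed.

Lemma badp_single_product eps t0 T : n = 1%nat -> 0 < eps ->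
  badp n v A q eps t0 T 1 (fun _ => 0%nat) <= 0.
Proof.
  intros Hn1 Heps.
  apply (badp_le_supermartingale eps t0 (fun _ _ => 0)); auto using zero_quality_unsold_zero.
  - intros. lra.
  - intros s d _ _ Hbad. destruct (bad_appeal_witness eps d Heps Hbad) as [j [Hj _]]. lia.
  - intros s d _. unfold next_mean. rewrite fsum_ext with (g := fun _ => 0) by (intros; ring).
    rewrite fsum_zero. lra.
Qed.

Lemma badp_vanishes eps delta : (2 <= n)%nat -> 0 < eps -> 0 < delta ->
  exists t0, forall T, badp n v A q eps t0 T 1 (fun _ => 0%nat) <= delta.
Proof.
  intros Hn Heps Hdelta.
  assert (Hn_R : 1 <= INR n) by (replace 1 with (INR 1) by reflexivity; apply le_INR; lia).
  set (c := eps / INR n). assert (Hc : 0 < c) by (apply Rdiv_lt_0_compat; lra).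
  (* [K] and [t0] make both bounds start below [delta / 2]. *)
  set (K := 2 * INR n / delta). assert (HK : 0 < K) by (apply Rdiv_lt_0_compat; lra).
  destruct (urn_potential_large c K Hc HK) as [L [HL HLbig]].
  destruct (INR_unbounded (INR n * (L / c + L))) as [M HM].
  destruct (lam_uniform_lower_bound Hn) as [lm [Hlm Hlam]].
  assert (Hlm1 : lm <= 1).
  { pose proof (Hlam _ zero_quality_unsold_zero). pose proof (lam_le_q0 (fun _ => 0%nat)). lra. }
  set (mu := 1 - lm / 2). assert (Hmu : 0 < mu < 1) by (unfold mu; lra).
  assert (Hsmall : 0 < delta / 2 * mu * (/ 2) ^ M)
    by (repeat apply Rmult_lt_0_compat; try lra; apply pow_lt; lra).
  destruct (pow_lt_1_zero mu ltac:(rewrite Rabs_right; lra) _ Hsmall) as [t0 Ht0].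
  exists t0. intros T.
  apply Rle_trans with (few_sales_bound mu t0 M 1 (fun _ => 0%nat) + urn_bound K (fun _ => 0%nat)).
  - apply (badp_le_supermartingale eps t0 (fun s d => few_sales_bound mu t0 M s d + urn_bound K d));
      auto using zero_quality_unsold_zero.
    + intros s d _. pose proof (few_sales_bound_nonneg mu t0 M s d ltac:(lra)).
      pose proof (urn_bound_nonneg K d HK). lra.
    + intros s d _ Hs Hbad. pose proof (few_sales_bound_nonneg mu t0 M s d ltac:(lra)).
      pose proof (urn_bound_nonneg K d HK).
      destruct (bad_state_cases eps L M d Heps HL ltac:(fold c; lra) Hbad) as [[j [Hj [HLj Hcj]]]|Hfew].
      * pose proof (urn_bound_ge_1 K d j HK Hj (HLbig j d Hj HLj Hcj)). lra.
      * pose proof (few_sales_bound_ge_1 mu t0 M s d ltac:(lra) Hs Hfew). lra.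
    + intros s d Hd. rewrite next_mean_add.
      pose proof (few_sales_bound_supermartingale lm t0 M s d (conj Hlm (Hlam d Hd)) ltac:(lra))
        as Hfew. fold mu in Hfew.
      pose proof (urn_bound_supermartingale K d HK). lra.
  - pose proof (Ht0 t0 (le_n t0)) as Hpow. rewrite Rabs_right in Hpow by (apply Rle_ge, pow_le; lra).
    pose proof (few_sales_bound_start mu t0 M (delta / 2) ltac:(lra) ltac:(lra)).
    rewrite urn_bound_zero.
    assert (INR (pred n) <= INR n) by (apply le_INR; lia).
    assert (/ K * INR (pred n) <= / K * INR n)
      by (apply Rmult_le_compat_l; [apply Rlt_le, Rinv_0_lt_compat|]; lra).
    replace (/ K * INR n) with (delta / 2) in * by (unfold K; field; lra).
    lra.
Qed.

End Market.

Theorem mainTheorem8 (n : nat) (v A q : nat -> R)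
  (Hn : (1 <= n)%nat)
  (Hv_dec : forall i j, (i <= j)%nat -> (j < n)%nat -> v j <= v i)
  (Hv_pos : forall i, (i < n)%nat -> 0 < v i)
  (HA : forall i, (i < n)%nat -> 0 < A i)
  (Hq1 : q 0%nat <= 1)
  (Hq_dec : forall i, (S i < n)%nat -> q (S i) < q i)
  (Hq_nonneg : 0 <= q (pred n)) :
  (* lambda_t -> q_1 almost surely: for every eps > 0, the probability that
     |lambda_s - q_1| > eps for some s >= t0 tends to 0 as t0 -> infinity
     (process starts at step 1 with d = 0) *)
  (forall eps, 0 < eps -> forall delta, 0 < delta ->
     exists t0 : nat, forall T : nat,
       badp n v A q eps t0 T 1 (fun _ => 0%nat) <= delta)
  /\
  (forall (sigma : nat -> nat) (b : nat -> R),
     is_perm n sigma ->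
     (forall i, (i < n)%nat -> 0 < b i) ->
     fsum n (fun i => v (sigma i) * b i / fsum n (fun j => v (sigma j) * b j) * q i)
       <= q 0%nat).
Proof.
  split.
  - intros eps Heps delta Hdelta. destruct (Nat.eq_dec n 1) as [Hn1|Hn1].
    + exists 0%nat. intros T. apply Rle_trans with 0; [|lra].
      eapply badp_single_product; eauto.
    + apply badp_vanishes; auto; lia.
  - intros sigma b [Hsigma _] Hb. apply fsum_normalized_le.
    + intros i Hi. apply Rlt_le, Rmult_lt_0_compat; auto.
    + apply fsum_pos; auto. intros i Hi. apply Rmult_lt_0_compat; auto.
    + intros i Hi. apply (q_antitone n q Hn Hq_dec); lia.
Qed.
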